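(* Let $(S,A,T,s_1)$ be a finite MDP, let $\pi_E$ be a deterministic expert policy whose induced Markov chain $P_E$ on $S$ is irreducible and aperiodic, with stationary state-action distribution $\rho^E$ and mixing time $\tau_{\mathrm{mix}}$. Let $\eta>0$ and $\delta\in(0,1)$, and suppose the expert dataset is obtained from an expert trajectory $s_1,a_1,\dots,s_N,a_N$ of length $$N \;\ge\; \max\Big\{800|S|,\; 450\log\big(\tfrac{2}{\delta}\big)\Big\}\,\tau_{\mathrm{mix}}^3\,\eta^{-2}.$$ Let $D$ be the set of state-action pairs visited in this trajectory, let $R_{\mathrm{int}}(s,a)=\mathbb{1}\{(s,a)\in D\}$, and let $\pi_I$ be an imitation policy that maximizes the expected per-step intrinsic reward $\mathbb{E}_{\rho^{\pi}}[R_{\mathrm{int}}]$ over stationary policies (in particular $\mathbb{E}_{\rho^{I}}[R_{\mathrm{int}}]\ge \mathbb{E}_{\rho^{E}}[R_{\mathrm{int}}]$), and whose induced Markov chain is irreducible and aperiodic, with stationary state-action distribution $\rho^I$. Then, with probability at least $1-\delta$ over the generation of the expert trajectory, $$\|\rho^E-\rho^I\|_{\mathrm{TV}}\le \eta,$$ and, with the same probability, simultaneously for every reward function $R:S\times A\to[0,1]$, $$\mathbb{E}_{\rho^I}[R]\;\ge\;\mathbb{E}_{\rho^E}[R]-\eta.$$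
   Context: A finite MDP has finite state space $S$, finite action space $A$, transition kernel $T(\cdot\mid s,a)$ and initial state $s_1$. A stationary policy $\pi$ maps each state to a distribution $\pi(\cdot\mid s)$ over $A$; it induces the Markov chain on $S$ with $P_\pi(s,s')=\sum_a \pi(a\mid s)T(s'\mid s,a)$. If $P_\pi$ is irreducible and aperiodic it has a unique stationary distribution $\rho^\pi_S$ on $S$, and we write $\rho^\pi(s,a)=\rho^\pi_S(s)\pi(a\mid s)$ for the stationary state-action distribution; the expected per-step reward of $\pi$ for a reward $R$ is $\mathbb{E}_{\rho^\pi}[R]=\sum_{s,a}\rho^\pi(s,a)R(s,a)$. For the expert, $P_E=P_{\pi_E}$, $\rho^E_S=\rho^{\pi_E}_S$, $\rho^E=\rho^{\pi_E}$; for the imitation learner $\rho^I=\rho^{\pi_I}$. The total variation distance between distributions on a finite set $X$ is $\|\rho_1-\rho_2\|_{\mathrm{TV}}=\sup_{M\subseteq X}|\rho_1(M)-\rho_2(M)|$. The mixing time $\tau_{\mathrm{mix}}$ of $P_E$ is the smallest integer $t\ge 0$ such that $\max_{s'\in S}\|\mathbb{1}(s')^\top P_E^t-\rho^E_S\|_{\mathrm{TV}}\le \tfrac14$, where $\mathbb{1}(s')$ is the indicator (point mass) vector of $s'$. The expert trajectory is generated by running $\pi_E$ in the MDP. *)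

From HB Require Import structures.
From mathcomp Require Import all_boot all_order all_algebra.
From mathcomp Require Import boolp reals exp.
Set Implicit Arguments. Unset Strict Implicit. Unset Printing Implicit Defensive.
Import Order.TTheory GRing.Theory Num.Theory.
Local Open Scope ring_scope.

Section MDP.
Variables (R : realType) (S A : finType).

(* transition kernel T s a s' = T(s' | s, a) *)
Definition is_kernel (T : S -> A -> S -> R) : Prop :=
  (forall s a s', 0 <= T s a s') /\ (forall s a, \sum_(s' : S) T s a s' = 1).

(* stationary (randomized) policy pol s a = pi(a | s) *)
Definition is_policy (pol : S -> A -> R) : Prop :=
  (forall s a, 0 <= pol s a) /\ (forall s, \sum_(a : A) pol s a = 1).

Definition det_pol (piE : S -> A) : S -> A -> R :=
  fun s a => (a == piE s)%:R.

Definition Pmat (T : S -> A -> S -> R) (pol : S -> A -> R) : S -> S -> R :=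
  fun s s' => \sum_(a : A) pol s a * T s a s'.

Fixpoint Ppow (P : S -> S -> R) (n : nat) : S -> S -> R :=
  match n with
  | 0 => fun s s' => (s == s')%:R
  | n'.+1 => fun s s' => \sum_(u : S) Ppow P n' s u * P u s'
  end.

Definition irreducible (P : S -> S -> R) : Prop :=
  forall s s', exists n : nat, 0 < Ppow P n s s'.

Definition aperiodic (P : S -> S -> R) : Prop :=
  forall s (d : nat),
    (forall n : nat, (0 < n)%N -> 0 < Ppow P n s s -> (d %| n)%N) -> d = 1%N.

Definition is_stationary (P : S -> S -> R) (rho : S -> R) : Prop :=
  (forall s, 0 <= rho s) /\ \sum_(s : S) rho s = 1 /\
  (forall s', \sum_(s : S) rho s * P s s' = rho s').

Definition sa_dist (rho : S -> R) (pol : S -> A -> R) : S * A -> R :=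
  fun p => rho p.1 * pol p.1 p.2.

Definition expect (rho : S -> R) (pol : S -> A -> R) (Rw : S -> A -> R) : R :=
  \sum_(s : S) \sum_(a : A) rho s * pol s a * Rw s a.

End MDP.

Definition tv {R : realType} {X : finType} (r1 r2 : X -> R) : R :=
  \big[Num.max/0]_(M : {set X}) `|\sum_(x in M) r1 x - \sum_(x in M) r2 x|.

Definition mixing_ok {R : realType} {S : finType} (P : S -> S -> R) (rho : S -> R)
  (t : nat) : Prop :=
  forall s' : S, tv (fun u => Ppow P t s' u) rho <= 1 / 4.

Definition is_mixing_time {R : realType} {S : finType} (P : S -> S -> R)
  (rho : S -> R) (tau : nat) : Prop :=
  mixing_ok P rho tau /\ (forall t, (t < tau)%N -> ~ mixing_ok P rho t).

(* probability of the state sequence x = (s_1, ..., s_N) when running the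
   deterministic expert piE from s1 (actions are a_i = piE s_i) *)
Definition traj_prob {R : realType} {S A : finType} (T : S -> A -> S -> R) (s1 : S)
  (piE : S -> A) (N : nat) (x : N.-tuple S) : R :=
  (nth s1 x 0 == s1)%:R *
  \prod_(1 <= k < N) T (nth s1 x k.-1) (piE (nth s1 x k.-1)) (nth s1 x k).

(* intrinsic reward: indicator of the state-action pairs visited in the
   trajectory, D = {(s_i, piE s_i)} *)
Definition Rint {R : realType} {S A : finType} (piE : S -> A) (N : nat)
  (x : N.-tuple S) : S -> A -> R :=
  fun s a => ((s \in x) && (a == piE s))%:R.

Definition maximizes {R : realType} {S A : finType} (T : S -> A -> S -> R)
  (Rw : S -> A -> R) (piI : S -> A -> R) (rhoI : S -> R) : Prop :=
  forall (pol : S -> A -> R) (rho : S -> R),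
    is_policy pol -> irreducible (Pmat T pol) -> aperiodic (Pmat T pol) ->
    is_stationary (Pmat T pol) rho ->
    expect rho pol Rw <= expect rhoI piI Rw.

Definition good_event {R : realType} {S A : finType} (T : S -> A -> S -> R)
  (piE : S -> A) (rhoE : S -> R) (eta : R) (N : nat) (x : N.-tuple S) : Prop :=
  forall (piI : S -> A -> R) (rhoI : S -> R),
    is_policy piI -> irreducible (Pmat T piI) -> aperiodic (Pmat T piI) ->
    is_stationary (Pmat T piI) rhoI ->
    maximizes T (@Rint R S A piE N x) piI rhoI ->
    tv (sa_dist rhoE (@det_pol R S A piE)) (sa_dist rhoI piI) <= eta /\
    (forall Rw : S -> A -> R, (forall s a, 0 <= Rw s a <= 1) ->
       expect rhoE (@det_pol R S A piE) Rw - eta <= expect rhoI piI Rw).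

From Pilot Require Import Defs.
From HB Require Import structures.
From mathcomp Require Import all_boot all_order all_algebra.
From mathcomp Require Import boolp reals sequences exp.
From mathcomp Require Import ring lra zify.
Import Order.TTheory GRing.Theory Num.Theory.
Local Open Scope ring_scope.
Set Implicit Arguments. Unset Strict Implicit. Unset Printing Implicit Defensive.

(* For a trajectory x, unvisited_mass x is the stationary expert mass of the
   states x misses, and deviation = sum_s rhoI(s) (1 - piI(piE s | s)) is the
   stationary mass with which the imitation policy leaves the expert action.
   - Deterministic half.  Comparing piI with the expert in the maximization
     gives 1 - unvisited_mass x = E_E[Rint] <= E_I[Rint] <= 1 - deviation.
     A Dobrushin contraction argument for the positive-part mass
     pmass v = sum_s max(v s, 0) gives pmass(rhoE - rhoI) <= 2 tau deviation,
     and every state-action test function with values in [0,1] (subset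
     indicators, rewards) then sees a gap of at most (2 tau + 1) deviation.
     Hence (2 tau + 1) unvisited_mass x <= eta makes x a good trajectory.
   - Probabilistic half.  By mixing, from any state the chain enters a set W
     of stationary mass >= eps0 within k tau steps with probability at least
     eps0 / 2, so a trajectory of length n+1 avoids W with probability at most
     (1 - eps0/2)^(n / k tau) (killed-chain estimate).  A union bound over the
     2^|S| candidate sets of unvisited states, with eps0 = eta / (3 tau) and
     the sample-size hypothesis, bounds the bad probability by delta. *)

Section PositiveMass.
Variables (R : realType) (S : finType).
Implicit Types (u v : S -> R) (Q : S -> S -> R).

(* Positive-part mass of a signed vector; for a zero-sum vector this is its
   total variation norm. *)
Definition pmass v : R := \sum_s Num.max (v s) 0.

Definition vmul v Q : S -> R := fun s' => \sum_s v s * Q s s'.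

Definition stochastic Q : Prop :=
  (forall s s', 0 <= Q s s') /\ (forall s, \sum_s' Q s s' = 1).

Lemma max0E (x : R) : Num.max x 0 = if x < 0 then 0 else x.
Proof. by []. Qed.

Lemma max0_ge0 (x : R) : 0 <= Num.max x 0.
Proof. by rewrite le_max lexx orbT. Qed.

Lemma max0_ge (x : R) : x <= Num.max x 0.
Proof. by rewrite le_max lexx. Qed.

Lemma pmass_ge0 v : 0 <= pmass v.
Proof. by apply: sumr_ge0 => s _; exact: max0_ge0. Qed.

Lemma pmass_ext u v : (forall s, u s = v s) -> pmass u = pmass v.
Proof. by move=> huv; apply: eq_bigr => s _; rewrite huv. Qed.

Lemma pmass_nneg v : (forall s, 0 <= v s) -> pmass v = \sum_s v s.
Proof. by move=> hv; apply: eq_bigr => s _; rewrite max_l. Qed.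

Lemma sum_le_pmass v (M : pred S) : \sum_(s | M s) v s <= pmass v.
Proof.
rewrite /pmass [X in _ <= X](bigID M) /= -[X in X <= _]addr0.
apply: lerD; first by apply: ler_sum => s _; exact: max0_ge.
by apply: sumr_ge0 => s _; exact: max0_ge0.
Qed.

Lemma pmassE v : pmass v = \sum_(s | 0 <= v s) v s.
Proof.
rewrite /pmass (bigID (fun s => 0 <= v s)) /= [X in _ + X]big1 ?addr0.
  by apply: eq_bigr => s hs; rewrite max_l.
by move=> s; rewrite -ltNge => hs; rewrite max_r // ltW.
Qed.

Lemma pmass_opp v : \sum_s v s = 0 -> pmass (fun s => - v s) = pmass v.
Proof.
move=> v0; apply/eqP; rewrite -subr_eq0 /pmass -sumrB.
rewrite (eq_bigr (fun s => - v s)) ?sumrN ?v0 ?oppr0 // => s _.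
by rewrite !max0E; case: ltrP => h1; case: ltrP => h2; lra.
Qed.

Lemma pmass_add u v : pmass (fun s => u s + v s) <= pmass u + pmass v.
Proof.
rewrite /pmass -big_split; apply: ler_sum => s _ /=.
by rewrite !max0E; case: ltrP => h1; case: ltrP => h2; case: ltrP => h3; lra.
Qed.

Lemma pmass_le u v : (forall s, u s <= v s) -> pmass u <= pmass v.
Proof.
move=> huv; apply: ler_sum => s _; have := huv s.
by rewrite !max0E; case: ltrP => h1; case: ltrP => h2; lra.
Qed.

Lemma pmass_contract v Q : stochastic Q -> pmass (vmul v Q) <= pmass v.
Proof.
move=> [Q0 Q1].
apply: (@le_trans _ _ (pmass (vmul (fun s => Num.max (v s) 0) Q))).
  apply: pmass_le => z; apply: ler_sum => s _.
  by apply: ler_wpM2r => //; exact: max0_ge.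
rewrite pmass_nneg; last first.
  by move=> z; apply: sumr_ge0 => s _; rewrite mulr_ge0 // max0_ge0.
rewrite /vmul exchange_big /pmass le_eqVlt; apply/orP; left; apply/eqP.
by apply: eq_bigr => s _; rewrite -mulr_sumr Q1 mulr1.
Qed.

(* Dobrushin's contraction: if any two rows of Q give any set masses
   differing by at most D, then Q shrinks the mass of zero-sum vectors by
   the factor D. *)
Lemma pmass_dobrushin v Q (D : R) : stochastic Q -> \sum_s v s = 0 ->
  (forall x y (M : pred S), \sum_(z | M z) Q x z - \sum_(z | M z) Q y z <= D) ->
  pmass (vmul v Q) <= D * pmass v.
Proof.
move=> [Q0 Q1] v0 hD.
case: (pickP (@predT S)) => [s0 _|S0]; last first.
  by rewrite /pmass !big_pred0 ?mulr0.
rewrite pmassE /vmul exchange_big /=.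
set M0 := (fun z => 0 <= \sum_s v s * Q s z).
pose f s := \sum_(z | M0 z) Q s z.
have -> : \sum_s \sum_(z | M0 z) v s * Q s z = \sum_s v s * f s.
  by apply: eq_bigr => s _; rewrite /f mulr_sumr.
pose smin := [arg min_(i < s0) f i]%O.
have fmin s : f smin <= f s.
  by rewrite /smin; case: (arg_minP f (P := xpredT) (i0 := s0)) => // i _; apply.
have -> : \sum_s v s * f s = \sum_s v s * (f s - f smin).
  under [RHS]eq_bigr do rewrite mulrBr.
  by rewrite sumrB -mulr_suml v0 mul0r subr0.
rewrite /pmass mulr_sumr; apply: ler_sum => s _.
have f0 : 0 <= f s - f smin by rewrite subr_ge0.
apply: (@le_trans _ _ (Num.max (v s) 0 * (f s - f smin))).
  by apply: ler_wpM2r => //; exact: max0_ge.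
by rewrite mulrC; apply: ler_wpM2r; [exact: max0_ge0 | exact: hD].
Qed.

End PositiveMass.

Section MatrixPowers.
Variables (R : realType) (S : finType).
Implicit Types (v : S -> R) (P : S -> S -> R).

Lemma Ppow_add P m n s s' :
  Ppow P (m + n) s s' = \sum_u Ppow P m s u * Ppow P n u s'.
Proof.
elim: n s' => [|n IH] s'.
  rewrite addn0 /= (bigD1 s') //= eqxx mulr1 big1 ?addr0 // => u hu.
  by rewrite (negbTE hu) mulr0.
rewrite addnS /=.
under eq_bigr do rewrite IH mulr_suml.
rewrite exchange_big /=; apply: eq_bigr => u _.
by rewrite mulr_sumr; apply: eq_bigr => w _; rewrite mulrA.
Qed.

Lemma Ppow1 P s s' : Ppow P 1 s s' = P s s'.
Proof.
rewrite /= (bigD1 s) //= eqxx mul1r big1 ?addr0 // => u hu.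
by rewrite eq_sym (negbTE hu) mul0r.
Qed.

Lemma PpowSl P n s s' : Ppow P n.+1 s s' = \sum_u P s u * Ppow P n u s'.
Proof. by rewrite -add1n Ppow_add; apply: eq_bigr => u _; rewrite Ppow1. Qed.

Lemma vmul_Ppow0 P v z : vmul v (Ppow P 0) z = v z.
Proof.
rewrite /vmul /= (bigD1 z) //= eqxx mulr1 big1 ?addr0 // => u hu.
by rewrite (negbTE hu) mulr0.
Qed.

Lemma Ppow_stochastic P n : stochastic P -> stochastic (Ppow P n).
Proof.
move=> [P0 P1]; elim: n => [|n [IH0 IH1]].
  split=> [s s'|s] /=; first by rewrite ler0n.
  by rewrite (bigD1 s) //= eqxx big1 ?addr0 // => u hu; rewrite eq_sym (negbTE hu).
split=> [s s'|s] /=; first by apply: sumr_ge0 => u _; rewrite mulr_ge0.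
rewrite exchange_big /= -(IH1 s); apply: eq_bigr => u _.
by rewrite -mulr_sumr P1 mulr1.
Qed.

Lemma vmul_Ppow_stationary P (rho : S -> R) n :
  (forall s', vmul rho P s' = rho s') -> forall s', vmul rho (Ppow P n) s' = rho s'.
Proof.
move=> hrho; elim: n => [|n IH] s'; first exact: vmul_Ppow0.
rewrite /vmul /=.
under eq_bigr do rewrite mulr_sumr.
rewrite exchange_big /= -[RHS]hrho; apply: eq_bigr => u _.
by rewrite -IH /vmul mulr_suml; apply: eq_bigr => w _; rewrite mulrA.
Qed.

Lemma tv_ge (r1 r2 : S -> R) (M : pred S) :
  `|\sum_(x | M x) r1 x - \sum_(x | M x) r2 x| <= tv r1 r2.
Proof.
have -> : \sum_(x | M x) r1 x - \sum_(x | M x) r2 x =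
    \sum_(x in [set z | M z]) r1 x - \sum_(x in [set z | M z]) r2 x.
  by congr (_ - _); apply: eq_bigl => z; rewrite inE.
exact: (le_bigmax _ (fun M : {set S} =>
  `|\sum_(x in M) r1 x - \sum_(x in M) r2 x|)).
Qed.

Lemma mixing_oscillation P rho t : mixing_ok P rho t ->
  forall x y (M : pred S),
  \sum_(z | M z) Ppow P t x z - \sum_(z | M z) Ppow P t y z <= 1 / 2.
Proof.
move=> hmix x y M.
have hx := le_trans (tv_ge (fun w => Ppow P t x w) rho M) (hmix x).
have hy := le_trans (tv_ge (fun w => Ppow P t y w) rho M) (hmix y).
by move: hx hy; rewrite !ler_norml => /andP[? ?] /andP[? ?]; lra.
Qed.

Lemma mixing_decay P rho t : stochastic P -> is_stationary P rho ->
  mixing_ok P rho t ->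
  forall k u, pmass (fun s => Ppow P (k * t) u s - rho s) <= (1 / 2) ^+ k.
Proof.
move=> hP [rho0 [rho1 rhoP]] hmix; elim => [|k IH] u.
  rewrite expr0 mul0n; apply: (@le_trans _ _ (pmass (fun s => Ppow P 0 u s))).
    by apply: pmass_le => s; rewrite lerBlDr lerDl.
  rewrite pmass_nneg; last by move=> s; rewrite /= ler0n.
  by have [_ ->] := Ppow_stochastic 0 hP.
have rhoPt := vmul_Ppow_stationary t rhoP.
have -> : pmass (fun s => Ppow P (k.+1 * t) u s - rho s) =
          pmass (vmul (fun s => Ppow P (k * t) u s - rho s) (Ppow P t)).
  apply: pmass_ext => s; rewrite mulSnr Ppow_add /vmul -[in LHS](rhoPt s).
  by rewrite /vmul -sumrB; apply: eq_bigr => w _; rewrite mulrBl.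
apply: le_trans (pmass_dobrushin (Ppow_stochastic t hP) _ (mixing_oscillation hmix)) _.
  by have [_ hrow] := Ppow_stochastic (k * t) hP; rewrite sumrB hrow rho1 subrr.
by rewrite exprS ler_wpM2l //; lra.
Qed.

End MatrixPowers.

Section Policies.
Variables (R : realType) (S A : finType) (T : S -> A -> S -> R).
Hypothesis kT : is_kernel T.

Lemma Pmat_det (piE : S -> A) s s' : Pmat T (det_pol R piE) s s' = T s (piE s) s'.
Proof.
rewrite /Pmat /det_pol (bigD1 (piE s)) //= eqxx mul1r big1 ?addr0 // => a ha.
by rewrite (negbTE ha) mul0r.
Qed.

Lemma det_policy (piE : S -> A) : is_policy (det_pol R piE).
Proof.
split=> [s a|s]; first by rewrite /det_pol ler0n.
rewrite /det_pol (bigD1 (piE s)) //= eqxx big1 ?addr0 // => a ha.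
by rewrite (negbTE ha).
Qed.

Lemma stochastic_Pmat (pol : S -> A -> R) : is_policy pol -> stochastic (Pmat T pol).
Proof.
case: kT => T0 T1 [p0 p1]; split=> [s s'|s].
  by apply: sumr_ge0 => a _; rewrite mulr_ge0.
rewrite /Pmat exchange_big /= -(p1 s); apply: eq_bigr => a _.
by rewrite -mulr_sumr T1 mulr1.
Qed.

Lemma policy_compl (pol : S -> A -> R) s a0 : is_policy pol ->
  \sum_(a | a != a0) pol s a = 1 - pol s a0.
Proof. by case=> _ p1; rewrite -(p1 s) [in RHS](bigD1 a0) //= addrAC subrr add0r. Qed.

Lemma policy_le1 (pol : S -> A -> R) s a0 : is_policy pol -> pol s a0 <= 1.
Proof.
move=> hpol; rewrite -subr_ge0 -policy_compl //.
by apply: sumr_ge0 => a _; case: hpol.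
Qed.

Lemma policy_avg_ge (pol : S -> A -> R) (G : A -> R) s a0 : is_policy pol ->
  (forall a, 0 <= G a) -> pol s a0 * G a0 <= \sum_a pol s a * G a.
Proof.
move=> [p0 _] hG; rewrite (bigD1 a0) //= lerDl.
by apply: sumr_ge0 => a _; rewrite mulr_ge0.
Qed.

End Policies.

Section ImitationGap.
Variables (R : realType) (S A : finType) (T : S -> A -> S -> R).
Hypothesis kT : is_kernel T.
Variables (piE : S -> A) (piI : S -> A -> R) (rhoI rhoE : S -> R).
Hypothesis hpiI : is_policy piI.
Hypothesis hrhoI : is_stationary (Pmat T piI) rhoI.
Hypothesis hrhoE : is_stationary (Pmat T (det_pol R piE)) rhoE.
Notation PE := (Pmat T (det_pol R piE)).

Definition deviation : R := \sum_s rhoI s * (1 - piI s (piE s)).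

Lemma deviation_ge0 : 0 <= deviation.
Proof.
apply: sumr_ge0 => s _; apply: mulr_ge0; first by case: hrhoI.
by rewrite subr_ge0 policy_le1.
Qed.

Lemma one_step_defect : pmass (fun z => rhoI z - vmul rhoI PE z) <= deviation.
Proof.
case: hrhoI => rho0 [_ rhoP]; case: kT => T0 T1.
pose g s z := \sum_(a | a != piE s) piI s a * T s a z.
apply: (@le_trans _ _ (pmass (fun z => \sum_s rhoI s * g s z))).
  apply: pmass_le => z; rewrite -{1}rhoP /vmul -sumrB; apply: ler_sum => s _.
  rewrite -mulrBr ler_wpM2l // Pmat_det /Pmat (bigD1 (piE s)) //= -/(g s z).
  have := policy_le1 s (piE s) hpiI; have := T0 s (piE s) z.
  have [p0 _] := hpiI; have := p0 s (piE s); nra.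
rewrite pmass_nneg; last first.
  move=> z; apply: sumr_ge0 => s _; rewrite mulr_ge0 //.
  by apply: sumr_ge0 => a _; rewrite mulr_ge0 //; case: hpiI.
rewrite exchange_big /deviation le_eqVlt; apply/orP; left; apply/eqP.
apply: eq_bigr => s _; rewrite -mulr_sumr -policy_compl //; congr (_ * _).
rewrite /g exchange_big /=; apply: eq_bigr => a _.
by rewrite -mulr_sumr T1 mulr1.
Qed.

(* Telescoping the one-step defect through n contractive expert steps. *)
Lemma n_step_defect n :
  pmass (fun z => rhoI z - vmul rhoI (Ppow PE n) z) <= n%:R * deviation.
Proof.
have hPE := stochastic_Pmat kT (det_policy R piE).
elim: n => [|n IH].
  rewrite (@pmass_ext _ _ _ (fun _ => 0)); last by move=> z; rewrite vmul_Ppow0 subrr.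
  by rewrite pmass_nneg // big1 // mul0r.
pose c z := rhoI z - vmul rhoI PE z.
rewrite (@pmass_ext _ _ _ (fun z => (rhoI z - vmul rhoI (Ppow PE n) z)
                                   + vmul c (Ppow PE n) z)); last first.
  move=> z; rewrite /c /vmul.
  have -> : \sum_s (rhoI s - \sum_s0 rhoI s0 * PE s0 s) * Ppow PE n s z =
    \sum_s rhoI s * Ppow PE n s z - \sum_s rhoI s * Ppow PE n.+1 s z.
    under eq_bigr do rewrite mulrBl.
    rewrite sumrB; congr (_ - _).
    transitivity (\sum_s \sum_s0 rhoI s0 * (PE s0 s * Ppow PE n s z)).
      by apply: eq_bigr => s _; rewrite mulr_suml; apply: eq_bigr => s0 _; rewrite mulrA.
    by rewrite exchange_big; apply: eq_bigr => s0 _; rewrite PpowSl mulr_sumr.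
  ring.
apply: le_trans (pmass_add _ _) _.
rewrite -natr1 mulrDl mul1r; apply: lerD => //.
apply: le_trans (pmass_contract _ (Ppow_stochastic n hPE)) _.
exact: one_step_defect.
Qed.

(* State marginals: after tau expert steps rhoI - rhoE shrinks by 1/2 while
   rhoI itself moves by at most tau * deviation. *)
Lemma state_gap tau : mixing_ok PE rhoE tau ->
  pmass (fun z => rhoE z - rhoI z) <= 2 * tau%:R * deviation.
Proof.
move=> hmix; case: hrhoE => _ [e1 e2]; case: hrhoI => _ [i1 _].
have hPE := stochastic_Pmat kT (det_policy R piE).
have zero_sum : \sum_z (rhoI z - rhoE z) = 0 by rewrite sumrB i1 e1 subrr.
rewrite (@pmass_ext _ _ _ (fun z => - (rhoI z - rhoE z))); last by move=> z; rewrite opprB.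
rewrite pmass_opp //; set L := pmass _.
have hsplit : L <= pmass (vmul (fun z => rhoI z - rhoE z) (Ppow PE tau)) +
                   pmass (fun z => rhoI z - vmul rhoI (Ppow PE tau) z).
  apply: le_trans (pmass_add _ _); rewrite le_eqVlt; apply/orP; left; apply/eqP.
  apply: pmass_ext => z; rewrite /vmul; under eq_bigr do rewrite mulrBl.
  by rewrite sumrB; have := vmul_Ppow_stationary tau e2 z; rewrite /vmul => ->; ring.
have hcontr := pmass_dobrushin (Ppow_stochastic tau hPE) zero_sum (mixing_oscillation hmix).
have := n_step_defect tau; have := pmass_ge0 (fun z => rhoI z - rhoE z).
rewrite -/L -mulrA in hcontr *; lra.
Qed.

Lemma pointwise_gap (rE rI p f G : R) : 0 <= rI -> 0 <= f <= 1 -> p <= 1 ->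
  p * f <= G -> rE * f - rI * G <= Num.max (rE - rI) 0 + rI * (1 - p).
Proof.
move=> rI0 /andP[f0 f1] p1 hG.
have m0 := max0_ge0 (rE - rI); have m1 := max0_ge (rE - rI).
have h1 : rI * (p * f) <= rI * G by rewrite ler_wpM2l.
have h2 : (rE - rI) * f <= Num.max (rE - rI) 0 * f by rewrite ler_wpM2r.
have h3 : Num.max (rE - rI) 0 * f <= Num.max (rE - rI) 0 by rewrite ler_piMr.
have h4 : rI * (1 - p) * f <= rI * (1 - p).
  by rewrite ler_piMr // mulr_ge0 // subr_ge0.
nra.
Qed.

Lemma state_action_gap (F : S -> A -> R) : (forall s a, 0 <= F s a <= 1) ->
  `|\sum_s \sum_a (rhoE s * det_pol R piE s a - rhoI s * piI s a) * F s a|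
  <= pmass (fun z => rhoE z - rhoI z) + deviation.
Proof.
have one_side G : (forall s a, 0 <= G s a <= 1) ->
    \sum_s \sum_a (rhoE s * det_pol R piE s a - rhoI s * piI s a) * G s a
    <= pmass (fun z => rhoE z - rhoI z) + deviation.
  move=> hG; rewrite /pmass /deviation -big_split; apply: ler_sum => s _ /=.
  have -> : \sum_a (rhoE s * det_pol R piE s a - rhoI s * piI s a) * G s a =
            rhoE s * G s (piE s) - rhoI s * \sum_a piI s a * G s a.
    under eq_bigr do rewrite mulrBl.
    rewrite sumrB mulr_sumr (bigD1 (piE s)) //= big1 ?addr0; last first.
      by move=> a ha; rewrite /det_pol (negbTE ha) mulr0 mul0r.
    by rewrite /det_pol eqxx mulr1; congr (_ - _); apply: eq_bigr => a _; rewrite mulrA.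
  apply: pointwise_gap; [by case: hrhoI | exact: hG | exact: policy_le1 |].
  by apply: policy_avg_ge => // a; case/andP: (hG s a).
move=> hF; rewrite ler_norml one_side // andbT lerNl.
pose d s a := rhoE s * det_pol R piE s a - rhoI s * piI s a.
have total : \sum_s \sum_a d s a = 0.
  have [_ [e1 _]] := hrhoE; have [_ [i1 _]] := hrhoI.
  have [_ pE1] := det_policy R piE; have [_ pI1] := hpiI.
  transitivity (\sum_s (rhoE s - rhoI s)); last by rewrite sumrB e1 i1 subrr.
  by apply: eq_bigr => s _; rewrite sumrB -!mulr_sumr pE1 pI1 !mulr1.
have flip : \sum_s \sum_a d s a * (1 - F s a) =
             \sum_s \sum_a d s a - \sum_s \sum_a d s a * F s a.
  rewrite -sumrB; apply: eq_bigr => s _.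
  by rewrite -sumrB; apply: eq_bigr => a _; ring.
rewrite total sub0r in flip.
rewrite -flip; apply: one_side => s a.
by case/andP: (hF s a) => f0 f1; apply/andP; split; lra.
Qed.

End ImitationGap.

Section GoodTrajectories.
Variables (R : realType) (S A : finType) (T : S -> A -> S -> R).
Hypothesis kT : is_kernel T.
Variables (piE : S -> A) (rhoE : S -> R).
Hypothesis hrhoE : is_stationary (Pmat T (det_pol R piE)) rhoE.
Notation PE := (Pmat T (det_pol R piE)).

Definition unvisited_mass (x : seq S) : R := \sum_(s | s \notin x) rhoE s.

Lemma unvisited_mass_ge0 x : 0 <= unvisited_mass x.
Proof. by apply: sumr_ge0 => s _; case: hrhoE. Qed.

Lemma unvisited_mass_le1 x : unvisited_mass x <= 1.
Proof.
case: hrhoE => e0 [e1 _]; rewrite -e1 [X in _ <= X](bigID (fun s => s \notin x)) /=.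
by rewrite lerDl; apply: sumr_ge0.
Qed.

Lemma expert_reward N (x : N.-tuple S) :
  expect rhoE (det_pol R piE) (Defs.Rint piE x) = 1 - unvisited_mass x.
Proof.
case: hrhoE => _ [e1 _].
have -> : 1 - unvisited_mass x = \sum_(s | s \in x) rhoE s.
  by rewrite -e1 (bigID (fun s => s \in x)) /= addrK.
rewrite /expect [LHS](bigID (fun s => s \in x)) /= [X in _ + X]big1 ?addr0.
  apply: eq_bigr => s hs; rewrite (bigD1 (piE s)) //= /det_pol /Defs.Rint hs eqxx !mulr1.
  by rewrite big1 ?addr0 // => a ha; rewrite (negbTE ha) ?mulr0 ?mul0r.
by move=> s hs; apply: big1 => a _; rewrite /Defs.Rint (negbTE hs) /= mulr0.
Qed.

(* The intrinsic reward is only earned on expert actions, so an imitation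
   policy loses at least its deviation mass. *)
Lemma imitation_reward (piI : S -> A -> R) (rhoI : S -> R) N (x : N.-tuple S) :
  is_policy piI -> is_stationary (Pmat T piI) rhoI ->
  expect rhoI piI (Defs.Rint piE x) <= 1 - deviation piE piI rhoI.
Proof.
move=> [p0 _] [i0 [i1 _]].
rewrite /deviation -i1 -sumrB; apply: ler_sum => s _.
rewrite (bigD1 (piE s)) //= big1 ?addr0; last first.
  by move=> a ha; rewrite /Defs.Rint (negbTE ha) andbF mulr0.
rewrite /Defs.Rint eqxx andbT; have := p0 s (piE s); have := i0 s.
by case: (s \in x) => /=; rewrite ?mulr1 ?mulr0; nra.
Qed.

Lemma good_event_of_unvisited tau (eta : R) N (x : N.-tuple S) :
  irreducible PE -> aperiodic PE -> mixing_ok PE rhoE tau ->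
  (2 * tau%:R + 1) * unvisited_mass x <= eta ->
  good_event T piE rhoE eta x.
Proof.
move=> irrE apE mixE hsmall piI rhoI hpiI irrI apI stI maxI.
have dev_le : deviation piE piI rhoI <= unvisited_mass x.
  have := maxI _ _ (det_policy R piE) irrE apE hrhoE.
  rewrite expert_reward; have := imitation_reward x hpiI stI; lra.
have gap F : (forall s a, 0 <= F s a <= 1) ->
    `|\sum_s \sum_a (rhoE s * det_pol R piE s a - rhoI s * piI s a) * F s a| <= eta.
  move=> hF; apply: le_trans (state_action_gap hpiI stI hrhoE hF) _.
  apply: le_trans hsmall; have := state_gap kT hpiI stI hrhoE mixE.
  have := deviation_ge0 piE hpiI stI; have := ler0n R tau; nra.
have eta0 : 0 <= eta.
  apply: le_trans hsmall; apply: mulr_ge0; last exact: unvisited_mass_ge0.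
  by have := ler0n R tau; lra.
split.
  apply: bigmax_le => // M _.
  have hM : forall (s : S) (a : A), 0 <= (((s, a) \in M)%:R : R) <= 1.
    by move=> s a; case: ((s, a) \in M); rewrite ?lexx ?ler01.
  apply: le_trans (gap _ hM); rewrite le_eqVlt; apply/orP; left; apply/eqP.
  congr `|_|; rewrite -sumrB pair_bigA /= [RHS](bigID (fun p => p \in M)) /=.
  rewrite [X in _ = _ + X]big1 ?addr0; first by apply: eq_bigr => -[s a] /= ->; rewrite mulr1.
  by move=> [s a] /= /negbTE ->; rewrite mulr0.
move=> Rw hRw; have := gap Rw hRw; rewrite ler_norml => /andP[_ hgap].
suff hdiff : expect rhoE (det_pol R piE) Rw - expect rhoI piI Rw =
  \sum_s \sum_a (rhoE s * det_pol R piE s a - rhoI s * piI s a) * Rw s a by lra.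
rewrite /expect -sumrB; apply: eq_bigr => s _; rewrite -sumrB; apply: eq_bigr => a _.
by rewrite mulrBl.
Qed.

End GoodTrajectories.

Section KilledChain.
Variables (R : realType) (S : finType) (P : S -> S -> R) (W : {set S}).

(* The chain P killed upon entering W: K^n(a, b) is the probability of going
   from a to b in n steps without visiting W after time 0. *)
Definition killed (a b : S) : R := P a b * (b \notin W)%:R.

Lemma killed_pow_set0 n a b : W = set0 -> Ppow killed n a b = Ppow P n a b.
Proof.
move=> W0; elim: n b => [|n IH] b //=; apply: eq_bigr => u _.
by rewrite IH /killed W0 in_set0 mulr1.
Qed.

Hypothesis hP : stochastic P.

Lemma killed_pow_bounds n a b : 0 <= Ppow killed n a b <= Ppow P n a b.
Proof.
case: hP => P0 _; elim: n b => [|n IH] b; first by rewrite ler0n lexx.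
apply/andP; split.
  apply: sumr_ge0 => u _; case/andP: (IH u) => h _.
  by rewrite mulr_ge0 // /killed mulr_ge0 // ler0n.
apply: ler_sum => u _; case/andP: (IH u) => h1 h2.
apply: (@le_trans _ _ (Ppow killed n a u * P u b)); last by rewrite ler_wpM2r.
by rewrite ler_wpM2l // /killed; case: (b \notin W); rewrite ?mulr1 ?mulr0.
Qed.

Lemma killed_pow_in n a b : b \in W -> Ppow killed n.+1 a b = 0.
Proof. by move=> hb; rewrite /= big1 // => u _; rewrite /killed hb /= !mulr0. Qed.

Lemma killed_survival t a : (0 < t)%N ->
  \sum_b Ppow killed t a b <= 1 - \sum_(b in W) Ppow P t a b.
Proof.
case: t => [//|t] _.
have [_ hrow] := Ppow_stochastic t.+1 hP.
have -> : 1 - \sum_(b in W) Ppow P t.+1 a b = \sum_(b | b \notin W) Ppow P t.+1 a b.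
  by rewrite -(hrow a) (bigID (fun b => b \in W)) /= addrAC subrr add0r.
rewrite [X in X <= _](bigID (fun b => b \in W)) big1 ?Monoid.simpm.
  by apply: ler_sum => b _; case/andP: (killed_pow_bounds t.+1 a b).
by move=> b hb; rewrite killed_pow_in.
Qed.

Lemma killed_survival_blocks t (q : R) :
  (forall a, \sum_b Ppow killed t a b <= q) ->
  forall k r a, \sum_b Ppow killed (k * t + r) a b <= q ^+ k.
Proof.
move=> hq; elim => [|k IH] r a.
  rewrite mul0n add0n expr0; have [_ hrow] := Ppow_stochastic r hP.
  by rewrite -(hrow a); apply: ler_sum => b _; case/andP: (killed_pow_bounds r a b).
have q0 : 0 <= q.
  by apply: le_trans (hq a); apply: sumr_ge0 => b _; case/andP: (killed_pow_bounds t a b).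
have -> : (k.+1 * t + r = t + (k * t + r))%N by lia.
have -> : \sum_b Ppow killed (t + (k * t + r)) a b =
          \sum_c Ppow killed t a c * \sum_b Ppow killed (k * t + r) c b.
  under eq_bigr do rewrite Ppow_add.
  by rewrite exchange_big /=; apply: eq_bigr => c _; rewrite mulr_sumr.
apply: (@le_trans _ _ (\sum_c Ppow killed t a c * q ^+ k)).
  by apply: ler_sum => c _; rewrite ler_wpM2l ?IH //; case/andP: (killed_pow_bounds t a c).
by rewrite -mulr_suml exprS ler_wpM2r ?exprn_ge0.
Qed.

End KilledChain.

Section TupleSums.
Variables (R : realType) (S : finType).

Lemma tuple_sum0 (F : 0.-tuple S -> R) : \sum_y F y = F [tuple].
Proof. by rewrite (big_pred1 [tuple]) // => y; apply/esym/eqP; apply: tuple0. Qed.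

Lemma tuple_sumS n (F : n.+1.-tuple S -> R) :
  \sum_y F y = \sum_v \sum_(z : n.-tuple S) F [tuple of v :: z].
Proof.
rewrite pair_bigA /= (reindex (fun p : S * n.-tuple S => [tuple of p.1 :: p.2])) //=.
exists (fun y : n.+1.-tuple S => (thead y, [tuple of behead y])) => [[v z]|y] _ /=.
  by congr (_, _); apply: val_inj.
by rewrite -tuple_eta.
Qed.

End TupleSums.

Section Trajectories.
Variables (R : realType) (S A : finType) (T : S -> A -> S -> R).
Hypothesis kT : is_kernel T.
Variables (piE : S -> A) (s1 : S).
Notation PE := (Pmat T (det_pol R piE)).

Definition path_weight (u : S) (y : seq S) : R :=
  \prod_(0 <= k < size y) PE (nth s1 (u :: y) k) (nth s1 y k).

Lemma path_weight_nil u : path_weight u [::] = 1.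
Proof. by rewrite /path_weight big_geq. Qed.

Lemma path_weight_cons u v z : path_weight u (v :: z) = PE u v * path_weight v z.
Proof. by rewrite /path_weight /= big_nat_recl. Qed.

Lemma traj_prob_cons n (u : S) (y : n.-tuple S) :
  traj_prob T s1 piE [tuple of u :: y] = (u == s1)%:R * path_weight u y.
Proof.
rewrite /traj_prob /= /path_weight size_tuple; congr (_ * _).
by rewrite big_add1 /=; apply: eq_bigr => k _; rewrite Pmat_det.
Qed.

Lemma avoiding_paths (W : {set S}) n u :
  \sum_(y : n.-tuple S) (all (fun s => s \notin W) y)%:R * path_weight u y =
  \sum_v Ppow (killed PE W) n u v.
Proof.
elim: n u => [|n IH] u.
  rewrite tuple_sum0 /= path_weight_nil mulr1 (bigD1 u) //= eqxx big1 ?addr0 //.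
  by move=> v hv; rewrite eq_sym (negbTE hv).
rewrite tuple_sumS.
transitivity (\sum_v killed PE W u v * \sum_v' Ppow (killed PE W) n v v').
  apply: eq_bigr => v _; rewrite -IH mulr_sumr; apply: eq_bigr => z _.
  by rewrite /= path_weight_cons /killed; case: (v \notin W) => /=; ring.
under [RHS]eq_bigr do rewrite PpowSl.
by rewrite exchange_big /=; apply: eq_bigr => v _; rewrite mulr_sumr.
Qed.

Lemma traj_avoid_prob (W : {set S}) n :
  \sum_(x : n.+1.-tuple S) (all (fun s => s \notin W) x)%:R * traj_prob T s1 piE x =
  (s1 \notin W)%:R * \sum_v Ppow (killed PE W) n s1 v.
Proof.
rewrite tuple_sumS (bigD1 s1) //= [X in _ + X]big1 ?addr0; last first.
  by move=> u hu; apply: big1 => z _; rewrite traj_prob_cons (negbTE hu) mul0r mulr0.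
rewrite -avoiding_paths mulr_sumr; apply: eq_bigr => z _.
by rewrite traj_prob_cons eqxx /=; case: (s1 \notin W) => /=; ring.
Qed.

Lemma traj_prob_ge0 n (x : n.-tuple S) : 0 <= traj_prob T s1 piE x.
Proof.
rewrite /traj_prob mulr_ge0 ?ler0n //; apply: prodr_ge0 => k _.
by case: kT.
Qed.

Lemma traj_prob_total n : \sum_(x : n.+1.-tuple S) traj_prob T s1 piE x = 1.
Proof.
have := traj_avoid_prob set0 n; rewrite in_set0 /= mul1r.
rewrite (eq_bigr (fun x => traj_prob T s1 piE x)) => [->|x _]; last first.
  by rewrite (_ : all _ x = true) ?mul1r //; apply/allP => s _; rewrite in_set0.
have [_ hrow] := Ppow_stochastic n (stochastic_Pmat kT (det_policy R piE)).
by rewrite -(hrow s1); apply: eq_bigr => v _; rewrite killed_pow_set0.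
Qed.

Variable (rhoE : S -> R).
Hypothesis hrhoE : is_stationary PE rhoE.

Lemma avoid_prob_le tau k (eps0 : R) (W : {set S}) n :
  mixing_ok PE rhoE tau -> (0 < k * tau)%N ->
  (1 / 2) ^+ k <= eps0 / 2 -> eps0 <= \sum_(b in W) rhoE b ->
  \sum_(x : n.+1.-tuple S) (all (fun s => s \notin W) x)%:R * traj_prob T s1 piE x
   <= (1 - eps0 / 2) ^+ (n %/ (k * tau)).
Proof.
move=> hmix ht hk hW.
have hPE := stochastic_Pmat kT (det_policy R piE).
case: (hrhoE) => _ [e1 _].
rewrite traj_avoid_prob.
apply: (@le_trans _ _ (\sum_v Ppow (killed PE W) n s1 v)).
  have G0 : 0 <= \sum_v Ppow (killed PE W) n s1 v.
    by apply: sumr_ge0 => v _; case/andP: (killed_pow_bounds W hPE n s1 v).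
  by case: (s1 \notin W) => /=; rewrite ?mul1r ?mul0r.
rewrite {1}(divn_eq n (k * tau)); apply: killed_survival_blocks => // a.
apply: le_trans (killed_survival W hPE a ht) _.
suff : eps0 / 2 <= \sum_(b in W) Ppow PE (k * tau) a b by lra.
have hdecay := mixing_decay hPE hrhoE hmix k a.
have zero_sum : \sum_s (Ppow PE (k * tau) a s - rhoE s) = 0.
  by have [_ hrow] := Ppow_stochastic (k * tau) hPE; rewrite sumrB hrow e1 subrr.
have := sum_le_pmass (fun b => - (Ppow PE (k * tau) a b - rhoE b)) (fun b => b \in W).
rewrite pmass_opp // => hW'.
have : \sum_(b in W) - (Ppow PE (k * tau) a b - rhoE b) =
       \sum_(b in W) rhoE b - \sum_(b in W) Ppow PE (k * tau) a b.
  by rewrite -sumrB; apply: eq_bigr => b _; rewrite opprB.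
lra.
Qed.

End Trajectories.

Lemma sum_subpred_le (R : realType) (I : finType) (P Q : pred I) (f : I -> R) :
  (forall i, P i -> Q i) -> (forall i, 0 <= f i) ->
  \sum_(i | P i) f i <= \sum_(i | Q i) f i.
Proof.
move=> hPQ f0; rewrite [X in _ <= X](bigID P) /= -[X in X <= _]addr0.
apply: lerD; last by apply: sumr_ge0.
rewrite le_eqVlt; apply/orP; left; apply/eqP/eq_bigl => i.
by case hp: (P i); rewrite ?andbF // (hPQ i hp).
Qed.

Section BadTrajectories.
Variables (R : realType) (S A : finType) (T : S -> A -> S -> R).
Hypothesis kT : is_kernel T.
Variables (piE : S -> A) (s1 : S) (rhoE : S -> R).
Hypothesis hrhoE : is_stationary (Pmat T (det_pol R piE)) rhoE.
Notation PE := (Pmat T (det_pol R piE)).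

(* Union bound over the 2^|S| possible sets of unvisited states: trajectories
   missing stationary mass eps0 are exponentially unlikely. *)
Lemma unvisited_prob_le tau k (eps0 : R) n :
  mixing_ok PE rhoE tau -> (0 < k * tau)%N -> (1 / 2) ^+ k <= eps0 / 2 -> eps0 <= 1 ->
  \sum_(x : n.+1.-tuple S | eps0 <= unvisited_mass rhoE x) traj_prob T s1 piE x
  <= 2 ^+ #|S| * (1 - eps0 / 2) ^+ (n %/ (k * tau)).
Proof.
move=> hmix hkt hk eps01.
set q := 1 - eps0 / 2; set B := (n %/ (k * tau))%N.
pose heavy (W : {set S}) := eps0 <= \sum_(b in W) rhoE b.
pose avoids (x : n.+1.-tuple S) (W : {set S}) : R := (all (fun s => s \notin W) x)%:R.
have hP0 := traj_prob_ge0 kT piE s1.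
apply: (@le_trans _ _ (\sum_x \sum_(W | heavy W) avoids x W * traj_prob T s1 piE x)).
  rewrite big_mkcond /=; apply: ler_sum => x _.
  case: ifP => hx; last by apply: sumr_ge0 => W _; rewrite mulr_ge0 ?ler0n.
  pose Wx := [set s | s \notin x].
  have hWx : heavy Wx by rewrite /heavy (eq_bigl (fun s => s \notin x)) // => s; rewrite inE.
  rewrite (bigD1 Wx) //= (_ : avoids x Wx = 1) ?mul1r; last first.
    by rewrite /avoids (_ : all _ x = true) //; apply/allP => s hs; rewrite inE negbK.
  by rewrite lerDl; apply: sumr_ge0 => W _; rewrite mulr_ge0 ?ler0n.
rewrite exchange_big /=.
apply: (@le_trans _ _ (\sum_(W : {set S}) q ^+ B)).
  apply: (@le_trans _ _ (\sum_(W : {set S} | heavy W) q ^+ B)).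
    by apply: ler_sum => W hW; exact: (avoid_prob_le kT s1 hrhoE n hmix hkt hk hW).
  by apply: sum_subpred_le => // W; rewrite exprn_ge0 // /q; lra.
rewrite sumr_const -cardsT -powersetT card_powerset cardsT.
by rewrite -[X in X <= _]mulr_natr natrX mulrC.
Qed.

(* A chain that is 1/4-mixed at time 0 has a single state, so every
   nonempty trajectory visits everything. *)
Lemma unvisited_mass_mixing0 n (x : n.+1.-tuple S) :
  mixing_ok PE rhoE 0 -> unvisited_mass rhoE x = 0.
Proof.
move=> hmix; have one_state (y z : S) : y = z.
  have := mixing_oscillation hmix y z (pred1 y).
  rewrite !big_pred1_eq /= eqxx; case: (eqVneq z y) => [-> //|hne] /=.
  by rewrite ?mulr1n ?mulr0n => h; exfalso; move: h; lra.
by apply: big_pred0 => s; rewrite (one_state s (tnth x ord0)) mem_tnth.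
Qed.

Lemma good_prob_ge tau (eta : R) n :
  irreducible PE -> aperiodic PE -> mixing_ok PE rhoE tau ->
  1 - \sum_(x : n.+1.-tuple S | eta < (2 * tau%:R + 1) * unvisited_mass rhoE x)
        traj_prob T s1 piE x
  <= \sum_(x : n.+1.-tuple S | `[< good_event T piE rhoE eta x >]) traj_prob T s1 piE x.
Proof.
move=> irrE apE hmix.
rewrite -[X in X - _](traj_prob_total kT piE s1 n).
rewrite (bigID (fun x : n.+1.-tuple S => eta < (2 * tau%:R + 1) * unvisited_mass rhoE x)) /=.
rewrite addrAC subrr add0r.
rewrite big_mkcond [X in _ <= X]big_mkcond /=; apply: ler_sum => x _.
case: ltP => hx /=; first by case: ifP => // _; exact: (traj_prob_ge0 kT).
by rewrite (asboolT (good_event_of_unvisited kT hrhoE irrE apE hmix hx)).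
Qed.

End BadTrajectories.

Section Numerics.
Variable R : realType.

(* The sample-size arithmetic: with s = |S|, tt = tau, e = eta, L = ln(2/delta),
   blocks of length t <= 9 tt^2 / e and B + 1 >= (n + 1) / t blocks, the
   hypothesis M tt^3 <= e^2 (n + 1) leaves 6 tt (s + L) <= e B. *)
Lemma sample_size_arith (s tt e L n B t M : R) :
  1 <= s -> 1 <= tt -> 0 < e -> e < 3 * tt -> 0 <= L -> 0 < t ->
  e * t <= 9 * tt ^+ 2 -> n + 1 <= (B + 1) * t ->
  M * tt ^+ 3 <= e ^+ 2 * (n + 1) -> 400 * s + 225 * L <= M ->
  6 * tt * (s + L) <= e * B.
Proof.
move=> s1 tt1 e0 e3 L0 t0 et nB hM hM2.
have et0 : 0 < e * t by rewrite mulr_gt0.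
have h1 : e ^+ 2 * (n + 1) <= e ^+ 2 * ((B + 1) * t).
  by rewrite ler_wpM2l // exprn_ge0 // ltW.
have h2 : e ^+ 2 * t <= 27 * tt ^+ 3.
  have : e * (e * t) <= (3 * tt) * (9 * tt ^+ 2).
    by apply: ler_pM => //; exact: ltW.
  by rewrite expr2 !exprS expr0; lra.
have tt3 : 1 <= tt ^+ 3 by rewrite exprn_ege1.
have h3 : (400 * s + 225 * L) * tt ^+ 3 <= M * tt ^+ 3.
  by rewrite ler_wpM2r // exprn_ge0 //; lra.
have h4 : 6 * tt * (s + L) * (e * t) <= 6 * tt * (s + L) * (9 * tt ^+ 2).
  by apply: ler_wpM2l => //; apply: mulr_ge0; lra.
have h5 : 6 * tt * (s + L) * (9 * tt ^+ 2) = 54 * (s + L) * tt ^+ 3.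
  by rewrite !exprS expr0; ring.
have h6 : 54 * (s + L) * tt ^+ 3 + 27 * tt ^+ 3 <= (400 * s + 225 * L) * tt ^+ 3.
  by rewrite -mulrDl ler_wpM2r ?exprn_ge0 //; lra.
have h7 : e ^+ 2 * ((B + 1) * t) = (e * B) * (e * t) + e ^+ 2 * t by rewrite expr2; ring.
rewrite -(ler_pM2r et0); lra.
Qed.

(* Geometric tail against a union bound: if s + ln(2/delta) <= p B then
   2^s (1 - p)^B <= delta, using 1 - p <= exp(-p) and 2 <= e. *)
Lemma geometric_tail_le (s B : nat) (p delta : R) :
  0 <= 1 - p -> 0 < delta -> s%:R + ln (2 / delta) <= p * B%:R ->
  2 ^+ s * (1 - p) ^+ B <= delta.
Proof.
move=> q0 d0 h.
have hqB : (1 - p) ^+ B <= expR (B%:R * - p).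
  rewrite expRM_natl; apply: lerXn2r; rewrite ?qualifE /= ?expR_ge0 //.
  by rewrite (le_trans _ (expR_ge1Dx _)).
have d2 : 0 < 2 / delta by rewrite divr_gt0.
have h2 : expR (B%:R * - p) <= expR (- (s%:R + ln (2 / delta))) by rewrite ler_expR; lra.
rewrite expRN expRD lnK ?qualifE //= invfM invf_div in h2.
have hs : 2 ^+ s <= expR (s%:R : R).
  rewrite -[s%:R]mulr1 expRM_natl; apply: lerXn2r; rewrite ?qualifE /= ?expR_ge0 //.
  by have := expR_ge1Dx (1 : R); lra.
have es0 : 0 < expR (s%:R : R) := expR_gt0 _.
have h2s : 2 ^+ s / expR (s%:R : R) <= 1 by rewrite ler_pdivrMr // mul1r.
have : 2 ^+ s * (1 - p) ^+ B <= 2 ^+ s * ((expR (s%:R : R))^-1 * (delta / 2)).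
  by rewrite ler_wpM2l ?exprn_ge0 //; apply: le_trans hqB h2.
rewrite mulrA => h3; apply: le_trans h3 _.
have : 2 ^+ s * (expR (s%:R : R))^-1 * (delta / 2) <= 1 * (delta / 2).
  by rewrite ler_wpM2r // divr_ge0 // ltW.
lra.
Qed.

(* The number of mixing blocks: the least k > c, so that c < k <= c + 1 and
   2^(-k) < 1 / c. *)
Lemma exists_block_count (c : R) : 0 < c ->
  exists k : nat, [/\ (0 < k)%N, k%:R <= c + 1 & (1 / 2) ^+ k <= c^-1].
Proof.
move=> c0.
have exk : exists k : nat, c < k%:R.
  by exists (Num.Def.archi_bound c); apply: archi_boundP; exact: ltW.
case: (ex_minnP exk) => k hk kmin.
have k1 : (0 < k)%N by case: (posnP k) => [k0|//]; rewrite k0 /= in hk; lra.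
exists k; split => //.
  rewrite leNgt; apply/negP => hlt.
  have ek : k%:R = (k.-1)%:R + 1 :> R by rewrite natr1 prednK.
  have : c < (k.-1)%:R by lra.
  by move/kmin; rewrite -ltnS prednK // ltnn.
have ck : c < 2 ^+ k.
  by apply: lt_le_trans hk _; rewrite -natrX ler_nat; apply: ltnW; exact: ltn_expl.
rewrite div1r exprVn lef_pV2 ?posrE ?exprn_gt0 //; exact: ltW.
Qed.

(* Choice of the block length k tau and of eps0 = eta / (3 tau): the
   sample-size hypothesis makes the union bound at most delta. *)
Lemma block_length_choice (m tau n : nat) (eta delta : R) :
  (0 < m)%N -> (0 < tau)%N -> 0 < eta -> eta < 3 * tau%:R -> 0 < delta -> delta < 1 ->
  Num.max (800 * m%:R) (450 * ln (2 / delta)) * tau%:R ^+ 3 / eta ^+ 2 <= n.+1%:R ->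
  exists k : nat, [/\ (0 < k * tau)%N, (1 / 2) ^+ k <= eta / (3 * tau%:R) / 2 &
    2 ^+ m * (1 - eta / (3 * tau%:R) / 2) ^+ (n %/ (k * tau)) <= delta].
Proof.
move=> m0 tau0 eta0 eta3 d0 d1 hN.
set tt := tau%:R in eta3 hN *; set L := ln (2 / delta) in hN *.
have tt1 : 1 <= tt by rewrite ler1n.
have L0 : 0 <= L by apply: ln_ge0; rewrite ler_pdivlMr // mul1r; lra.
pose c := 6 * tt / eta.
have c0 : 0 < c by rewrite /c divr_gt0 // mulr_gt0 //; lra.
have eps0E : eta / (3 * tt) / 2 = c^-1.
  by rewrite /c invf_div; field; rewrite lt0r_neq0 // ltr0n.
have [k [k0 kc hk]] := exists_block_count c0.
have kt0 : (0 < k * tau)%N by rewrite muln_gt0 k0 tau0.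
exists k; split; rewrite ?eps0E //.
set t := (k * tau)%N; set B := (n %/ t)%N.
have tt0 : 0 < tt by lra.
have t0 : 0 < t%:R :> R by rewrite ltr0n.
have et : eta * t%:R <= 9 * tt ^+ 2.
  have ek : eta * k%:R <= 6 * tt + eta.
    have hc : eta * c = 6 * tt by rewrite /c mulrC divfK // gt_eqF.
    by have := ler_wpM2l (ltW eta0) kc; rewrite mulrDr mulr1 hc.
  rewrite /t natrM mulrA expr2; have := ler_wpM2r (ltW tt0) ek; nra.
have nB : (n%:R : R) + 1 <= (B%:R + 1) * t%:R.
  by have := ltn_ceil n kt0; rewrite -(ler_nat R) natrM -!natr1.
set M := Num.max _ _ in hN.
have hM : M * tt ^+ 3 <= eta ^+ 2 * (n%:R + 1).
  by rewrite natr1 [eta ^+ 2 * _]mulrC -ler_pdivrMr ?exprn_gt0.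
have hM1 : 800 * m%:R <= M by rewrite le_max lexx.
have hM2 : 450 * L <= M by rewrite le_max lexx orbT.
have m1 : 1 <= m%:R :> R by rewrite ler1n.
have key := sample_size_arith m1 tt1 eta0 eta3 L0 t0 et nB hM ltac:(lra).
apply: geometric_tail_le => //.
  rewrite subr_ge0 -eps0E.
  have : eta / (3 * tt) <= 1 by rewrite ler_pdivrMr ?mulr_gt0 // mul1r; lra.
  lra.
by rewrite /c invf_div mulrAC ler_pdivlMr ?mulr_gt0 // -/L; lra.
Qed.

End Numerics.

(* Main regime tau >= 1, eta < 3 tau: a bad trajectory misses stationary mass
   at least eps0 = eta / (3 tau), and with the block length chosen by
   block_length_choice the union bound makes this event delta-unlikely. *)
Lemma bad_prob_le (R : realType) (S A : finType) (T : S -> A -> S -> R)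
  (s1 : S) (piE : S -> A) (rhoE : S -> R) (tau n : nat) (eta delta : R) :
  is_kernel T -> is_stationary (Pmat T (det_pol R piE)) rhoE ->
  mixing_ok (Pmat T (det_pol R piE)) rhoE tau ->
  (0 < tau)%N -> 0 < eta -> eta < 3 * tau%:R -> 0 < delta -> delta < 1 ->
  Num.max (800 * #|S|%:R) (450 * ln (2 / delta)) * tau%:R ^+ 3 / eta ^+ 2
    <= n.+1%:R ->
  \sum_(x : n.+1.-tuple S | eta < (2 * tau%:R + 1) * unvisited_mass rhoE x)
     traj_prob T s1 piE x <= delta.
Proof.
move=> kT stE mixE tau_pos eta0 eta_small d0 d1 hN.
have S0 : (0 < #|S|)%N by apply/card_gt0P; exists s1.
have [k [kt hk hdelta]] := block_length_choice S0 tau_pos eta0 eta_small d0 d1 hN.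
have tau1 : 1 <= tau%:R :> R by rewrite ler1n.
have tau3 : 0 < 3 * tau%:R :> R by rewrite mulr_gt0 // ltr0n.
apply: le_trans hdelta; apply: le_trans (unvisited_prob_le kT s1 stE n mixE kt hk _).
  apply: sum_subpred_le => [x hx|x]; last exact: traj_prob_ge0.
  by rewrite ler_pdivrMr //; have := unvisited_mass_ge0 stE x; nra.
by rewrite ler_pdivrMr // mul1r ltW.
Qed.

Unset Implicit Arguments.

Theorem proposition1 (R : realType) (S A : finType) (T : S -> A -> S -> R)
  (s1 : S) (piE : S -> A) (rhoE : S -> R) (tau N : nat) (eta delta : R) :
  is_kernel T ->
  irreducible (Pmat T (@det_pol R S A piE)) ->
  aperiodic (Pmat T (@det_pol R S A piE)) ->
  is_stationary (Pmat T (@det_pol R S A piE)) rhoE ->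
  is_mixing_time (Pmat T (@det_pol R S A piE)) rhoE tau ->
  0 < eta -> 0 < delta -> delta < 1 -> (1 <= N)%N ->
  Num.max (800 * #|S|%:R) (450 * ln (2 / delta)) * tau%:R ^+ 3 / eta ^+ 2
    <= N%:R ->
  1 - delta <= \sum_(x : N.-tuple S | `[< good_event T piE rhoE eta x >])
                  traj_prob T s1 piE x.
Proof.
move=> kT irrE apE stE [mixE _] eta0 d0 d1 N1 hN.
case: N N1 hN => [//|n] _ hN.
apply: le_trans (good_prob_ge kT s1 stE eta n irrE apE mixE); rewrite lerD2l lerN2.
have no_bad : (forall x : n.+1.-tuple S,
    (2 * tau%:R + 1) * unvisited_mass rhoE x <= eta) ->
  \sum_(x : n.+1.-tuple S | eta < (2 * tau%:R + 1) * unvisited_mass rhoE x)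
     traj_prob T s1 piE x <= delta.
  by move=> hx; rewrite big_pred0 ?ltW // => x; rewrite ltNge hx.
have [tau0|tau_pos] := posnP tau.
  apply: no_bad => x; rewrite tau0 in mixE.
  by rewrite (unvisited_mass_mixing0 x mixE) mulr0 ltW.
have [eta_big|eta_small] := lerP (3 * tau%:R) eta.
  (* (2 tau + 1) * unvisited mass <= 3 tau <= eta: every trajectory is good *)
  apply: no_bad => x; apply: le_trans eta_big.
  have := unvisited_mass_le1 stE x; have := unvisited_mass_ge0 stE x.
  have : 1 <= tau%:R :> R by rewrite ler1n.
  nra.
exact: (bad_prob_le s1 kT stE mixE tau_pos eta0 eta_small d0 d1 hN).
Qed.
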